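(* Let $C$ be a cycle of goods, $N=\{1,2,3\}$ a set of agents with utility functions $u_1,u_2,u_3$ on $C$, and $c$ a real number with $0<c\le1$. Suppose that for two different agents $i,j\in N$ there is a bundle $A$ of some $\mathrm{mms}(i)$-split and a bundle $B$ of some $\mathrm{mms}(j)$-split of $C$ such that $u_i(A\cap B)\ge c\cdot\mathrm{mms}(i)$. Then there exists a $c$-sufficient allocation of the goods of $C$ to the agents in $N$.
   Context: A cycle of goods has goods $v_1,\dots,v_m$ with edges $v_iv_{i+1}$ and $v_mv_1$. A utility function assigns a non-negative real to each good, extended additively to sets. A bundle is a set of goods inducing a connected subgraph (empty allowed); a $3$-split is a sequence of $3$ pairwise disjoint bundles (possibly empty) with union all goods. $\mathrm{mms}(i)=\mathrm{mms}^{(3)}(C,u_i)=\max_{P_1,P_2,P_3}\min_k u_i(P_k)$ over all $3$-splits; an $\mathrm{mms}(i)$-split is a $3$-split attaining this maximum for $u_i$. An allocation is a $3$-split $P_1,P_2,P_3$ with $P_k$ given to agent $k$; it is $c$-sufficient if $u_k(P_k)\ge c\cdot\mathrm{mms}(k)$ for $k=1,2,3$. *)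

(* Utilities take values in an arbitrary realFieldType R
   (this includes the real numbers; all notions are finitary/algebraic). *)
From HB Require Import structures.
From mathcomp Require Import all_boot all_order all_algebra.
Set Implicit Arguments. Unset Strict Implicit. Unset Printing Implicit Defensive.
Import Order.TTheory GRing.Theory Num.Theory.
Local Open Scope ring_scope.

(* Goods of the cycle C_m are 'I_m: v_1..v_m is 0..m-1. *)
Definition cyc_adj (m : nat) (x y : 'I_m) : bool :=
  (val y == (val x).+1 %% m)%N || (val x == (val y).+1 %% m)%N.

(* S induces a connected subgraph (empty allowed): any two goods of S are
   joined by a path of the cycle staying inside S. *)
Definition connected_bundle (m : nat) (S : {set 'I_m}) : bool :=
  [forall x in S, forall y in S,
     connect [rel a b | [&& cyc_adj a b, a \in S & b \in S]] x y].

Definition uset (R : realFieldType) (m : nat) (u : 'I_m -> R) (S : {set 'I_m}) : R :=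
  \sum_(x in S) u x.

Definition is_split (m : nat) (P : {ffun 'I_3 -> {set 'I_m}}) : bool :=
  [forall k, connected_bundle (P k)] &&
  [forall k, forall l, (k != l) ==> [disjoint P k & P l]] &&
  (\bigcup_(k < 3) P k == [set: 'I_m]).

Definition minval (R : realFieldType) (m : nat) (u : 'I_m -> R)
    (P : {ffun 'I_3 -> {set 'I_m}}) : R :=
  Num.min (uset u (P ord0)) (Num.min (uset u (P (inord 1))) (uset u (P (inord 2)))).

(* mms^(3)(C,u) = max over 3-splits of min_k u(P_k).  The fold starts at 0,
   which is harmless for non-negative utilities (every split value is >= 0,
   and a split always exists). *)
Definition mms (R : realFieldType) (m : nat) (u : 'I_m -> R) : R :=
  \big[Num.max/0]_(P : {ffun 'I_3 -> {set 'I_m}} | is_split P) minval u P.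

Definition is_mms_split (R : realFieldType) (m : nat) (u : 'I_m -> R)
    (P : {ffun 'I_3 -> {set 'I_m}}) : Prop :=
  is_split P /\ minval u P = mms u.

Definition c_sufficient (R : realFieldType) (m : nat) (u : 'I_3 -> 'I_m -> R)
    (c : R) (P : {ffun 'I_3 -> {set 'I_m}}) : Prop :=
  is_split P /\ forall k : 'I_3, c * mms (u k) <= uset (u k) (P k).

(* Cutting the cycle 'I_m just after a good z turns it into a path; on this
   path a connected bundle avoiding z is an interval ([connected_interval]),
   disjoint intervals are linearly ordered, and an interval can be cut into two
   intervals separating any prescribed "earlier" and "later" parts.  From this
   we derive [remainder_split]: if a nonempty connected V lies inside a bundle
   of a split A and inside a bundle of a split B, then the complement of V can
   be cut into W1, W2 such that {V, W1, W2} is a split, W1 contains a bundle of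
   A and W2 a bundle of B.
   The allocation argument ([overlap_alloc]): let V be good enough for agent p
   and lie in a bundle of p's mms-split and of q's mms-split.  Split with
   A = B = q's split; the third agent k picks a bundle it values at least
   c * mms(k), which exists by pigeonhole.  If k picks W1 or W2, p takes V
   and q the other part; if k picks V, re-split with A = p's split and
   B = q's split and give W1 to p and W2 to q.
   The theorem follows: if the two given bundles cover the cycle, V is another
   bundle of j's split (inside both); otherwise V is their intersection, which
   is then connected. *)
From HB Require Import structures.
From mathcomp Require Import all_boot all_order all_algebra.
From mathcomp Require Import zify lra.
Set Implicit Arguments. Unset Strict Implicit. Unset Printing Implicit Defensive.
Import Order.TTheory GRing.Theory Num.Theory.

Lemma ord3_cases (l : 'I_3) : l = ord0 \/ l = inord 1 \/ l = inord 2.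
Proof.
case: l => [[|[|[|n]]] H]; last by [].
- by left; apply: val_inj.
- by right; left; apply: val_inj; rewrite /= inordK.
- by right; right; apply: val_inj; rewrite /= inordK.
Qed.

Lemma ord3_cover (i j k p : 'I_3) : i != j -> i != k -> j != k ->
  p = i \/ p = j \/ p = k.
Proof.
move=> /eqP ij /eqP ik /eqP jk.
have h1 : nat_of_ord i <> nat_of_ord j by move=> /ord_inj.
have h2 : nat_of_ord i <> nat_of_ord k by move=> /ord_inj.
have h3 : nat_of_ord j <> nat_of_ord k by move=> /ord_inj.
have := ltn_ord i; have := ltn_ord j; have := ltn_ord k; have := ltn_ord p => *.
have : (nat_of_ord p = i \/ nat_of_ord p = j \/ nat_of_ord p = k) by lia.
by case=> [/ord_inj|[/ord_inj|/ord_inj]]; auto.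
Qed.

Definition third (i j : 'I_3) : 'I_3 := inord (3 - i - j).

Lemma third_neq (i j : 'I_3) : i != j -> third i j != i /\ third i j != j.
Proof.
move=> /eqP ij; have h1 : nat_of_ord i <> nat_of_ord j by move=> /ord_inj.
have := ltn_ord i; have := ltn_ord j => *.
rewrite /third; split; apply/eqP => /(congr1 (@nat_of_ord 3)); rewrite inordK; lia.
Qed.

Lemma ord3_others (l : 'I_3) :
  exists l2 l3 : 'I_3, [/\ l2 != l, l3 != l & l2 != l3].
Proof.
pose l2 : 'I_3 := if l == ord0 then inord 1 else ord0.
have l2l : l2 != l.
  rewrite /l2; case: ifP => [/eqP ->|/negbT h]; last by rewrite eq_sym.
  by rewrite -val_eqE /= inordK.
have [l3l l3l2] := third_neq l2l.
by exists l2, (third l2 l); split; rewrite // eq_sym.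
Qed.

Section CycleGeometry.
Variable m : nat.
Notation T := 'I_m.

Definition bundle_rel (S : {set T}) :=
  [rel a b : T | [&& cyc_adj a b, a \in S & b \in S]].

Lemma bundle_rel_sym (S : {set T}) : symmetric (bundle_rel S).
Proof.
by move=> a b; rewrite /= /cyc_adj orbC; case: (a \in S); case: (b \in S);
  rewrite ?andbT ?andbF.
Qed.

Lemma connectedP (S : {set T}) :
  reflect (forall x y, x \in S -> y \in S -> connect (bundle_rel S) x y)
          (connected_bundle S).
Proof.
apply: (iffP forallP) => H.
  by move=> x y xS yS; move: (H x); rewrite xS /= => /forallP/(_ y); rewrite yS.
by move=> x; apply/implyP => xS; apply/forallP => y; apply/implyP => yS; apply: H.
Qed.

(* Position of x on the path obtained by cutting the cycle just after z:
   the successor of z has position 0 and z itself the last position m-1. *)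
Definition pos (z x : T) : nat := if (z < x)%N then x - z.+1 else x + m - z.+1.

Definition nxt (x : T) : T :=
  Ordinal (ltn_pmod x.+1 (leq_ltn_trans (leq0n x) (ltn_ord x))).

Lemma val_nxt x : nat_of_ord (nxt x) = (if x.+1 == m then 0 else x.+1)%N.
Proof.
rewrite /=; case: eqP => [->|H]; first by rewrite modnn.
by rewrite modn_small //; have := ltn_ord x; lia.
Qed.

Lemma pos_lt z x : (pos z x < m)%N.
Proof. rewrite /pos; have := ltn_ord x; have := ltn_ord z; case: (ltnP z x); lia. Qed.

Lemma pos_z z : pos z z = m.-1.
Proof. rewrite /pos ltnn; have := ltn_ord z; lia. Qed.

Lemma pos_inj z x y : pos z x = pos z y -> x = y.
Proof.
rewrite /pos => H; apply: ord_inj; move: H; have := ltn_ord x; have := ltn_ord y;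
  have := ltn_ord z; case: (ltnP z x); case: (ltnP z y); lia.
Qed.

Lemma pos_nxt z x : x != z -> pos z (nxt x) = (pos z x).+1.
Proof.
move=> /eqP xz; have xz' : nat_of_ord x <> nat_of_ord z by move=> /ord_inj.
rewrite /pos val_nxt; have := ltn_ord x; have := ltn_ord z.
case E: (x.+1 == m); move/eqP: E => E /=; do ?case: ifP => ?; lia.
Qed.

Lemma pos_nxt_z z : pos z (nxt z) = 0%N.
Proof.
rewrite /pos val_nxt; case: eqP => [E|_]; last by rewrite ltnSn subnn.
by rewrite ltn0 add0n E subnn.
Qed.

Lemma adj_pos z a b : cyc_adj a b -> a != z -> b != z ->
  pos z b = (pos z a).+1 \/ pos z a = (pos z b).+1.
Proof.
move=> /orP [] /eqP E az bz.
- left; have -> : b = nxt a by apply: val_inj; rewrite /= E.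
  exact: pos_nxt.
- right; have -> : a = nxt b by apply: val_inj; rewrite /= E.
  exact: pos_nxt.
Qed.

Definition interval z (S : {set T}) :=
  forall x y w, x \in S -> y \in S ->
    (pos z x <= pos z w)%N -> (pos z w <= pos z y)%N -> w \in S.

Lemma connect_walk z (U : {set T}) (x y : T) : (pos z x <= pos z y)%N ->
  (forall w, (pos z x <= pos z w)%N -> (pos z w <= pos z y)%N -> w \in U) ->
  connect (bundle_rel U) x y.
Proof.
move Hn : (pos z y - pos z x)%N => n; elim: n x Hn => [|n IH] x Hn le H.
  have -> : x = y by apply: (pos_inj (z:=z)); lia.
  exact: connect0.
have xz : x != z.
  by apply/eqP => E; have := pos_lt z y; rewrite E pos_z in Hn *; lia.
apply: (connect_trans (y := nxt x)).
  apply: connect1; rewrite /= !H ?pos_nxt ?leqnn //; try lia.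
  by rewrite /cyc_adj eqxx.
apply: IH; rewrite ?pos_nxt //; try lia.
by move=> w h1 h2; apply: H; lia.
Qed.

Lemma interval_connected z (S : {set T}) : interval z S -> connected_bundle S.
Proof.
move=> iS; apply/connectedP => x y xS yS.
case: (leqP (pos z x) (pos z y)) => h.
  by apply: (connect_walk (z:=z)) => // w h1 h2; apply: (iS x y).
rewrite (sym_connect_sym (@bundle_rel_sym S)).
by apply: (connect_walk (z:=z)); [lia|] => w h1 h2; apply: (iS y x).
Qed.

(* A connected bundle avoiding z cannot jump over the cut: it is an interval,
   since the goods before a missing good w form a closed part of S. *)
Lemma connected_interval z (S : {set T}) :
  connected_bundle S -> z \notin S -> interval z S.
Proof.
move=> /connectedP cS zS x y w xS yS h1 h2; apply/negPn/negP => wS.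
have neq v : v \in S -> pos z v <> pos z w.
  by move=> vS /pos_inj E; move: wS; rewrite -E vS.
have hx := neq x xS; have hy := neq y yS.
have cl : closed (bundle_rel S) [pred v | (pos z v < pos z w)%N].
  move=> a b /= /and3P [ab aS bS].
  have az : a != z by apply: contraNneq zS => <-.
  have bz : b != z by apply: contraNneq zS => <-.
  have ha := neq a aS; have hb := neq b bS.
  by rewrite !inE; case: (adj_pos ab az bz) => E; apply/idP/idP; lia.
have := closed_connect cl (cS x y xS yS); rewrite !inE => E.
have : (pos z x < pos z w)%N by lia.
by rewrite E; lia.
Qed.

Lemma connected_setC (S : {set T}) : connected_bundle S -> connected_bundle (~: S).
Proof.
move=> cS; apply/connectedP => y1 y2 h1 h2.
have iS : interval y1 S by apply: connected_interval cS _; rewrite -in_setC.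
have ny2 : y2 \notin S by rewrite -in_setC.
case: (boolP [exists s in S, (pos y1 s < pos y1 y2)%N]).
  (* S lies before y2, so the path from y2 up to y1 avoids S *)
  case/exists_inP => s sS lt; rewrite (sym_connect_sym (@bundle_rel_sym _)).
  apply: (connect_walk (z:=y1)); first by rewrite pos_z; have := pos_lt y1 y2; lia.
  move=> w l1 l2; rewrite in_setC; apply/negP => wS.
  by move: ny2; rewrite (iS s w y2 sS wS) //; lia.
(* no good of S precedes y2: step from y1 to its successor, then walk to y2 *)
move/exists_inPn => H.
have H' w : (pos y1 w <= pos y1 y2)%N -> w \in ~: S.
  move=> le; rewrite in_setC; apply/negP => wS.
  have := H w wS; rewrite -leqNgt => le2.
  have E : w = y2 by apply: (pos_inj (z:=y1)); lia.
  by move: ny2; rewrite -E wS.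
apply: (connect_trans (y := nxt y1)).
  apply: connect1; rewrite /= /cyc_adj eqxx /= h1 /=; apply: H'.
  by rewrite pos_nxt_z.
by apply: (connect_walk (z:=y1)); rewrite ?pos_nxt_z // => w _ le; exact: H'.
Qed.

Lemma connected_setI (S S' : {set T}) : connected_bundle S -> connected_bundle S' ->
  S :|: S' != setT -> connected_bundle (S :&: S').
Proof.
move=> c1 c2 ne; have [z zn] : exists z, z \notin S :|: S'.
  apply/existsP; rewrite -negb_forall; apply: contra ne => /forallP H.
  by rewrite -subTset; apply/subsetP => z _; apply: H.
rewrite in_setU negb_or in zn; case/andP: zn => z1 z2.
have i1 := connected_interval c1 z1; have i2 := connected_interval c2 z2.
apply: (interval_connected (z:=z)) => x y w; rewrite !inE.
by move=> /andP [x1 x2] /andP [y1 y2] l1 l2; rewrite (i1 x y w) ?(i2 x y w).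
Qed.

Definition before z (D E : {set T}) :=
  forall d e, d \in D -> e \in E -> (pos z d < pos z e)%N.

Lemma before_or_overlap z (D E : {set T}) : before z D E \/
  exists2 d, d \in D & exists2 e, e \in E & (pos z e <= pos z d)%N.
Proof.
case: (boolP [forall d in D, forall e in E, (pos z d < pos z e)%N]).
  by move=> /forall_inP H; left => d e dD eE; move: (H d dD) => /forall_inP; apply.
case/forall_inPn => d dD /forall_inPn [e eE]; rewrite -leqNgt => le.
by right; exists d => //; exists e.
Qed.

Lemma intervals_ordered z (D E : {set T}) : interval z D -> interval z E ->
  [disjoint D & E] -> before z D E \/ before z E D.
Proof.
move=> iD iE dj.
have out x : x \in D -> x \in E -> False by move=> xD; rewrite (disjointFr dj xD).
case: (set_0Vmem D) => [-> | [d0 d0D]]; first by left => d e; rewrite inE.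
case: (set_0Vmem E) => [-> | [e0 e0E]]; first by right => e d; rewrite inE.
have ne d e : d \in D -> e \in E -> pos z d <> pos z e.
  by move=> dD eE /pos_inj Eq; apply: (out d dD); rewrite Eq.
have := ne d0 e0 d0D e0E; case: (ltnP (pos z d0) (pos z e0)) => h _.
  left => d e dD eE; have := ne d e dD eE; have := ne d0 e d0D eE.
  have := ne d e0 dD e0E; case: (ltnP (pos z d) (pos z e)) => // h2 n1 n2 n3.
  case: (ltnP (pos z e) (pos z d0)) => h3.
    by case: (out d0 d0D); apply: (iE e e0) => //; lia.
  by case: (out e _ eE); apply: (iD d0 d) => //; lia.
right => e d eE dD; have := ne d e dD eE; have := ne d0 e d0D eE.
have := ne d e0 dD e0E; case: (ltnP (pos z e) (pos z d)) => // h2 n1 n2 n3.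
case: (ltnP (pos z d) (pos z e0)) => h3.
  by case: (out e0 _ e0E); apply: (iD d d0) => //; lia.
by case: (out d dD); apply: (iE e0 e) => //; lia.
Qed.

Definition bipartition (W W1 W2 : {set T}) :=
  [/\ connected_bundle W1, connected_bundle W2, [disjoint W1 & W2] & W1 :|: W2 = W].

Lemma bipartitionC W W1 W2 : bipartition W W1 W2 -> bipartition W W2 W1.
Proof. by case=> a b c d; split => //; [rewrite disjoint_sym | rewrite setUC]. Qed.

Lemma cut_interval z (W D E : {set T}) : interval z W ->
  D \subset W -> E \subset W -> before z D E ->
  exists W1 W2, [/\ bipartition W W1 W2, D \subset W1 & E \subset W2].
Proof.
move=> iW /subsetP DW /subsetP EW bDE.
set W1 := [set w in W | [exists d in D, (pos z w <= pos z d)%N]].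
have iW1 : interval z W1.
  move=> x y w; rewrite !inE => /andP [xW _] /andP [yW /exists_inP [d dD le]] l1 l2.
  by rewrite (iW x y w) //=; apply/exists_inP; exists d => //; lia.
have iW2 : interval z (W :\: W1).
  move=> x y w; rewrite !inE => /andP [nx xW] /andP [_ yW] l1 l2.
  rewrite (iW x y w xW yW l1 l2) andbT /=; apply/negP => /exists_inP [d dD le].
  by move: nx; rewrite xW /=; apply/negP/negPn/exists_inP; exists d => //; lia.
exists W1, (W :\: W1); split; first split.
- exact: interval_connected iW1.
- exact: interval_connected iW2.
- by rewrite disjoints_subset; apply/subsetP => x; rewrite !inE => ->.
- by apply/setP => x; rewrite !inE; case: (x \in W); rewrite ?andbT ?orbN ?andbF.
- by apply/subsetP => d dD; rewrite inE DW //=; apply/exists_inP; exists d.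
- apply/subsetP => e eE; rewrite !inE EW // andbT /=; apply/negP => /exists_inP [d dD le].
  by have := bDE d e dD eE; lia.
Qed.

Lemma two_cut_ordered z (W Ia Ib Jc Jd : {set T}) : interval z W ->
  Ia \subset W -> Ib \subset W -> Jc \subset W -> Jd \subset W ->
  before z Ia Ib -> before z Jc Jd ->
  exists W1 W2, [/\ bipartition W W1 W2, Ia \subset W1 \/ Ib \subset W1
                  & Jc \subset W2 \/ Jd \subset W2].
Proof.
move=> iW sa sb sc sd bI bJ.
case: (before_or_overlap z Ia Jd) => [h|[a aI [b bJd le]]].
  have [W1 [W2 [p s1 s2]]] := cut_interval iW sa sd h.
  by exists W1, W2; split => //; [left|right].
have h : before z Jc Ib.
  by move=> x y xJ yI; have := bJ x b xJ bJd; have := bI a y aI yI; lia.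
have [W1 [W2 [p s1 s2]]] := cut_interval iW sc sb h.
by exists W2, W1; split; [exact: bipartitionC p | right | left].
Qed.

Lemma two_cut z (W I1 I2 J1 J2 : {set T}) : interval z W ->
  interval z I1 -> interval z I2 -> interval z J1 -> interval z J2 ->
  I1 \subset W -> I2 \subset W -> J1 \subset W -> J2 \subset W ->
  [disjoint I1 & I2] -> [disjoint J1 & J2] ->
  exists W1 W2, [/\ bipartition W W1 W2, I1 \subset W1 \/ I2 \subset W1
                  & J1 \subset W2 \/ J2 \subset W2].
Proof.
move=> iW i1 i2 i3 i4 s1 s2 s3 s4 dI dJ.
have swap (A B X : {set T}) : A \subset X \/ B \subset X -> B \subset X \/ A \subset X.
  by case; [right|left].
case: (intervals_ordered i1 i2 dI) => hI; case: (intervals_ordered i3 i4 dJ) => hJ.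
- exact: (two_cut_ordered iW s1 s2 s3 s4 hI hJ).
- have [W1 [W2 [p h1 /swap h2]]] := two_cut_ordered iW s1 s2 s4 s3 hI hJ.
  by exists W1, W2.
- have [W1 [W2 [p /swap h1 h2]]] := two_cut_ordered iW s2 s1 s3 s4 hI hJ.
  by exists W1, W2.
- have [W1 [W2 [p /swap h1 /swap h2]]] := two_cut_ordered iW s2 s1 s4 s3 hI hJ.
  by exists W1, W2.
Qed.

End CycleGeometry.

Section Splits.
Variable m : nat.
Notation T := 'I_m.

Lemma split_conn (S : {ffun 'I_3 -> {set T}}) k : is_split S -> connected_bundle (S k).
Proof. by case/andP => /andP [/forallP h _] _. Qed.

Lemma split_disj (S : {ffun 'I_3 -> {set T}}) k l : is_split S -> k != l ->
  [disjoint S k & S l].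
Proof.
by case/andP => /andP [_ /forallP dj] _ kl; move: (dj k) => /forallP /(_ l); rewrite kl.
Qed.

Lemma split_cov (S : {ffun 'I_3 -> {set T}}) x : is_split S -> exists k, x \in S k.
Proof.
case/andP => _ /eqP cov; have : x \in \bigcup_(k < 3) S k by rewrite cov inE.
by case/bigcupP => k _ h; exists k.
Qed.

Lemma split_of (S : {ffun 'I_3 -> {set T}}) : (forall k, connected_bundle (S k)) ->
  (forall k l, k != l -> [disjoint S k & S l]) -> (forall x, exists k, x \in S k) ->
  is_split S.
Proof.
move=> c d cv; apply/andP; split; first (apply/andP; split).
- by apply/forallP.
- by apply/forallP => k; apply/forallP => l; apply/implyP; apply: d.
- apply/eqP/setP => x; rewrite inE; case: (cv x) => k h.
  by apply/bigcupP; exists k.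
Qed.

Lemma split_other_subset (S : {ffun 'I_3 -> {set T}}) s l (V : {set T}) :
  is_split S -> l != s -> V \subset S s -> S l \subset ~: V.
Proof.
move=> sS ls VS; apply/subsetP => x xl; rewrite inE; apply/negP => xV.
by move: (subsetP VS x xV); rewrite (disjointFr (split_disj sS ls) xl).
Qed.

Definition split3 (V W1 W2 : {set T}) : {ffun 'I_3 -> {set T}} :=
  [ffun k : 'I_3 => if k == ord0 then V else if k == inord 1 then W1 else W2].

Lemma split3_0 V W1 W2 : split3 V W1 W2 ord0 = V.
Proof. by rewrite ffunE eqxx. Qed.

Lemma split3_1 V W1 W2 : split3 V W1 W2 (inord 1) = W1.
Proof. by rewrite ffunE eqxx -val_eqE /= inordK. Qed.

Lemma split3_2 V W1 W2 : split3 V W1 W2 (inord 2) = W2.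
Proof. by rewrite ffunE -!val_eqE /= !inordK. Qed.

Lemma split3_split (V W1 W2 : {set T}) : connected_bundle V ->
  bipartition (~: V) W1 W2 -> is_split (split3 V W1 W2).
Proof.
move=> cV [c1 c2 d12 U].
have d1 : [disjoint V & W1] by rewrite disjoint_sym disjoints_subset -U subsetUl.
have d2 : [disjoint V & W2] by rewrite disjoint_sym disjoints_subset -U subsetUr.
apply: split_of.
- by move=> k; case: (ord3_cases k) => [|[|]] ->; rewrite ?split3_0 ?split3_1 ?split3_2.
- move=> k l; case: (ord3_cases k) => [|[|]] ->; case: (ord3_cases l) => [|[|]] ->;
    rewrite ?eqxx // ?split3_0 ?split3_1 ?split3_2 => _; by rewrite // disjoint_sym.
- move=> x; case: (boolP (x \in V)) => h; first by exists ord0; rewrite split3_0.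
  have : x \in ~: V by rewrite inE.
  rewrite -U inE => /orP [] h'.
    by exists (inord 1); rewrite split3_1.
  by exists (inord 2); rewrite split3_2.
Qed.

Lemma remainder_split (A B : {ffun 'I_3 -> {set T}}) a b (V : {set T}) z :
  is_split A -> is_split B -> connected_bundle V -> z \in V ->
  V \subset A a -> V \subset B b ->
  exists W1 W2 l1 l2, [/\ is_split (split3 V W1 W2), A l1 \subset W1 & B l2 \subset W2].
Proof.
move=> sA sB cV zV VA VB.
have zW : z \notin ~: V by rewrite inE zV.
have iW := connected_interval (connected_setC cV) zW.
have outside (X : {set T}) : X \subset ~: V -> z \notin X.
  by move=> XW; apply: contra zW; apply: (subsetP XW).
have [a2 [a3 [a2a a3a a23]]] := ord3_others a.
have [b2 [b3 [b2b b3b b23]]] := ord3_others b.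
have sA2 := split_other_subset sA a2a VA; have sA3 := split_other_subset sA a3a VA.
have sB2 := split_other_subset sB b2b VB; have sB3 := split_other_subset sB b3b VB.
have [W1 [W2 [p hA hB]]] := two_cut iW
  (connected_interval (split_conn a2 sA) (outside _ sA2))
  (connected_interval (split_conn a3 sA) (outside _ sA3))
  (connected_interval (split_conn b2 sB) (outside _ sB2))
  (connected_interval (split_conn b3 sB) (outside _ sB3))
  sA2 sA3 sB2 sB3 (split_disj sA a23) (split_disj sB b23).
exists W1, W2.
have [l1 h1] : exists l1, A l1 \subset W1 by case: hA; eexists; eassumption.
have [l2 h2] : exists l2, B l2 \subset W2 by case: hB; eexists; eassumption.
by exists l1, l2; split => //; apply: split3_split.
Qed.

End Splits.

Section Values.
Local Open Scope ring_scope.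

Variable R : realFieldType.
Variable m : nat.
Notation T := 'I_m.
Variable u : T -> R.
Hypothesis u_ge0 : forall x, 0 <= u x.

Lemma uset_ge0 X : 0 <= uset u X.
Proof. exact: sumr_ge0. Qed.

Lemma uset_sub (X Y : {set T}) : X \subset Y -> uset u X <= uset u Y.
Proof.
move=> sXY; rewrite /uset (big_setID (A := Y) X) /= (setIidPr sXY).
by rewrite lerDl; apply: sumr_ge0.
Qed.

Lemma uset_pos (X : {set T}) : 0 < uset u X -> exists x, x \in X.
Proof.
by move=> h; apply/set0Pn; apply: contraTneq h => ->; rewrite /uset big_set0 ltxx.
Qed.

Lemma split_sum (S : {ffun 'I_3 -> {set T}}) : is_split S ->
  uset u setT = uset u (S ord0) + uset u (S (inord 1)) + uset u (S (inord 2)).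
Proof.
move=> sS; case/andP: (sS) => _ /eqP cov.
rewrite /uset -cov partition_disjoint_bigcup; last by move=> k l; apply: split_disj.
rewrite !big_ord_recr big_ord0 /= add0r; congr (_ + _ + _); apply: eq_bigl => x;
  by congr (x \in S _); apply: val_inj; rewrite /= ?inordK.
Qed.

Lemma minval_le S l : minval u S <= uset u (S l).
Proof.
rewrite /minval; case: (ord3_cases l) => [|[|]] ->.
- by rewrite ge_min lexx.
- by rewrite ge_min ge_min lexx orbT.
- by rewrite ge_min ge_min lexx !orbT.
Qed.

Lemma mms_ge0 : 0 <= mms u.
Proof.
apply: (@big_ind R (fun v : R => 0 <= v)) => //.
  by move=> x y hx hy; rewrite le_max hx.
by move=> S _; rewrite /minval !le_min !uset_ge0.
Qed.

Lemma mms_bound : mms u + mms u + mms u <= uset u setT.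
Proof.
apply: (@big_ind R (fun v : R => v + v + v <= uset u setT)).
- by rewrite !addr0 uset_ge0.
- by move=> x y hx hy; case: (leP x y).
move=> S sS; rewrite (split_sum sS).
by apply: lerD; first apply: lerD; apply: minval_le.
Qed.

Variable c : R.
Hypothesis c_le1 : c <= 1.

Lemma mms_split_suff S l (X : {set T}) : is_mms_split u S -> S l \subset X ->
  c * mms u <= uset u X.
Proof.
case=> _ hS sX; apply: le_trans (uset_sub sX).
by apply: le_trans (ler_piMl mms_ge0 c_le1) _; rewrite -hS minval_le.
Qed.

(* Pigeonhole: in every split some bundle is c-sufficient. *)
Lemma pick_suff S : is_split S -> exists l, c * mms u <= uset u (S l).
Proof.
move=> sS; have hb := mms_bound; rewrite (split_sum sS) in hb.
have hc : c * mms u <= mms u by apply: ler_piMl; first exact: mms_ge0.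
move: hc hb; move: (c * mms u) => y; move: (mms u) => M hc hb.
case: (lerP y (uset u (S ord0))) => h0; first by exists ord0.
case: (lerP y (uset u (S (inord 1)))) => h1; first by exists (inord 1).
case: (lerP y (uset u (S (inord 2)))) => h2; first by exists (inord 2).
lra.
Qed.

End Values.

Section Allocation.
Local Open Scope ring_scope.

Variable R : realFieldType.
Variable m : nat.
Notation T := 'I_m.
Variable u : 'I_3 -> T -> R.
Variable c : R.
Hypothesis u_ge0 : forall k x, 0 <= u k x.
Hypothesis c_le1 : c <= 1.

Notation suff k X := (c * mms (u k) <= uset (u k) X).

Lemma assemble (i j k si sj sk : 'I_3) (S : {ffun 'I_3 -> {set T}}) :
  i != j -> i != k -> j != k -> si != sj -> si != sk -> sj != sk -> is_split S ->
  suff i (S si) -> suff j (S sj) -> suff k (S sk) ->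
  exists P : {ffun 'I_3 -> {set T}}, c_sufficient u c P.
Proof.
move=> ij ik jk sij sik sjk sS hi hj hk.
pose sg (p : 'I_3) := if p == i then si else if p == j then sj else sk.
have gi : sg i = si by rewrite /sg eqxx.
have gj : sg j = sj by rewrite /sg eq_sym (negbTE ij) eqxx.
have gk : sg k = sk by rewrite /sg eq_sym (negbTE ik) eq_sym (negbTE jk).
exists [ffun p => S (sg p)]; split.
  apply: split_of.
  - by move=> p; rewrite ffunE; apply: split_conn.
  - move=> p q pq; rewrite !ffunE; apply: split_disj => //.
    case: (ord3_cover p ij ik jk) pq => [|[|]] ->;
      case: (ord3_cover q ij ik jk) => [|[|]] ->;
      rewrite ?eqxx // ?gi ?gj ?gk => _ //; by rewrite eq_sym.
  - move=> x; case: (split_cov x sS) => l h.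
    case: (ord3_cover l sij sik sjk) h => [|[|]] -> h.
    + by exists i; rewrite ffunE gi.
    + by exists j; rewrite ffunE gj.
    + by exists k; rewrite ffunE gk.
move=> p; rewrite ffunE.
by case: (ord3_cover p ij ik jk) => [|[|]] ->; rewrite ?gi ?gj ?gk.
Qed.

Lemma assemble3 (p q r : 'I_3) (V W1 W2 : {set T}) :
  p != q -> p != r -> q != r -> is_split (split3 V W1 W2) ->
  suff p V -> suff q W1 -> suff r W2 ->
  exists P : {ffun 'I_3 -> {set T}}, c_sufficient u c P.
Proof.
move=> pq pr qr sS hp hq hr.
have n01 : (ord0 : 'I_3) != inord 1 by rewrite -val_eqE /= inordK.
have n02 : (ord0 : 'I_3) != inord 2 by rewrite -val_eqE /= inordK.
have n12 : (inord 1 : 'I_3) != inord 2 by rewrite -val_eqE /= !inordK.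
by apply: (assemble pq pr qr n01 n02 n12 sS);
  rewrite ?split3_0 ?split3_1 ?split3_2.
Qed.

(* An agent with zero share is satisfied by anything: let the third agent pick
   from another agent's mms-split, then hand out the remaining bundles. *)
Lemma zero_mms_alloc (p q : 'I_3) (S : {ffun 'I_3 -> {set T}}) :
  p != q -> mms (u p) = 0 -> is_mms_split (u q) S ->
  exists P : {ffun 'I_3 -> {set T}}, c_sufficient u c P.
Proof.
move=> pq p0 hS; have [kp kq] := third_neq pq.
have [l hl] := pick_suff (u_ge0 (third p q)) c_le1 hS.1.
have [l2 [l3 [l2l l3l l23]]] := ord3_others l.
apply: (assemble (si := l3) (sj := l2) (sk := l) pq _ _ _ l3l l2l hS.1 _ _ hl).
- by rewrite eq_sym.
- by rewrite eq_sym.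
- by rewrite eq_sym.
- by rewrite p0 mulr0 uset_ge0.
- exact: mms_split_suff (subxx _).
Qed.

Lemma overlap_alloc (p q k : 'I_3) (S S' : {ffun 'I_3 -> {set T}}) s s'
    (V : {set T}) z :
  p != q -> p != k -> q != k ->
  is_mms_split (u p) S -> is_mms_split (u q) S' ->
  connected_bundle V -> z \in V -> V \subset S s -> V \subset S' s' -> suff p V ->
  exists P : {ffun 'I_3 -> {set T}}, c_sufficient u c P.
Proof.
move=> pq pk qk hS hS' cV zV VS VS' hV.
have suffp l X := mms_split_suff (u_ge0 p) c_le1 (l := l) (X := X) hS.
have suffq l X := mms_split_suff (u_ge0 q) c_le1 (l := l) (X := X) hS'.
have [Y [Z [l1 [l2 [sT hY hZ]]]]] := remainder_split hS'.1 hS'.1 cV zV VS' VS'.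
have [l hl] := pick_suff (u_ge0 k) c_le1 sT.
case: (ord3_cases l) hl => [|[|]] -> hl.
- rewrite split3_0 in hl.
  have [W1 [W2 [l3 [l4 [sT' h3 h4]]]]] := remainder_split hS.1 hS'.1 cV zV VS VS'.
  by apply: (assemble3 _ _ pq sT' hl (suffp _ _ h3) (suffq _ _ h4)); rewrite eq_sym.
- rewrite split3_1 in hl.
  by apply: (assemble3 pk pq _ sT hV hl (suffq _ _ hZ)); rewrite eq_sym.
- rewrite split3_2 in hl.
  exact: (assemble3 pq pk qk sT hV (suffq _ _ hY) hl).
Qed.

End Allocation.

Local Open Scope ring_scope.

Theorem lemma4p11 (R : realFieldType) (m : nat) (u : 'I_3 -> 'I_m -> R) (c : R) :
  (forall (k : 'I_3) (x : 'I_m), 0 <= u k x) ->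
  0 < c -> c <= 1 ->
  (exists (i j : 'I_3) (P Q : {ffun 'I_3 -> {set 'I_m}}) (a b : 'I_3),
      [/\ i != j, is_mms_split (u i) P, is_mms_split (u j) Q &
          c * mms (u i) <= uset (u i) (P a :&: Q b)]) ->
  exists P : {ffun 'I_3 -> {set 'I_m}}, c_sufficient u c P.
Proof.
move=> u0 c0 c1 [i [j [P [Q [a [b [ij hP hQ hX]]]]]]].
have ji : j != i by rewrite eq_sym.
have [ik jk] : i != third i j /\ j != third i j.
  by have [ki kj] := third_neq ij; rewrite !(eq_sym _ (third i j)).
have := mms_ge0 (u0 i); rewrite le_eqVlt => /orP [/eqP/esym mi0|mi_gt0].
  exact: (zero_mms_alloc u0 c1 ij mi0 hQ).
have := mms_ge0 (u0 j); rewrite le_eqVlt => /orP [/eqP/esym mj0|mj_gt0].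
  exact: (zero_mms_alloc u0 c1 ji mj0 hP).
case: (boolP (P a :|: Q b == setT)) => cover.
- (* another bundle of j's split lies inside P a and serves as V *)
  have [b2 [_ [b2b _ _]]] := ord3_others b.
  have [z zV] : exists z, z \in Q b2.
    by apply: (uset_pos (u := u j)); apply: lt_le_trans mj_gt0 _; case: hQ => _ <-;
      apply: minval_le.
  have VP : Q b2 \subset P a.
    apply/subsetP => x xb2; move/eqP/setP/(_ x): cover; rewrite !inE => /orP [] // xb.
    by rewrite (disjointFr (split_disj hQ.1 b2b) xb2) in xb.
  apply: (overlap_alloc u0 c1 ji jk ik hQ hP (split_conn b2 hQ.1) zV (subxx _) VP).
  exact: (mms_split_suff (u0 j) c1 hQ (subxx _)).
- (* the overlap itself is a bundle and serves as V *)
  have [z zV] : exists z, z \in P a :&: Q b.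
    by apply: (uset_pos (u := u i)); apply: lt_le_trans hX; exact: mulr_gt0.
  apply: (overlap_alloc u0 c1 ij ik jk hP hQ _ zV (subsetIl _ _) (subsetIr _ _) hX).
  exact: connected_setI (split_conn a hP.1) (split_conn b hQ.1) cover.
Qed.
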